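(* Fix integers $k,d\ge 1$ and let $\mathcal{M}$ be the metric space of (equivalence classes of) measurable $k$-colorings of $\mathbb{R}^d$ described in the context. For every integer $n\geq 1$ and all integers $r_1,\dots,r_d\geq 1$, the set $B_n^{(r_1,\dots,r_d)}$ is a closed subset of $\mathcal{M}$.
   Context: A measurable $k$-coloring of $\mathbb{R}^d$ is a map $f:\mathbb{R}^d\to\{1,\dots,k\}$ whose color classes are Lebesgue measurable. For measurable colorings $f,g$ and integer $n\ge1$, let $D_n(f,g)=\{x\in[-n,n]^d: f(x)\neq g(x)\}$, $d_n(f,g)=\lambda(D_n(f,g))/n^d$ where $\lambda$ is $d$-dimensional Lebesgue measure, and $d(f,g)=\sum_{n=1}^\infty d_n(f,g)/2^{n+1}$. $\mathcal{M}$ is the metric space obtained by identifying colorings at distance $0$, with metric $d$. A cube is a product of $d$ non-degenerate intervals of equal length. A splitting of a cube $[a_1,b_1]\times\cdots\times[a_d,b_d]$ with exactly $r_i$ cuts in the $i$-th dimension is given by points $a_i=z^i_0<z^i_1<\dots<z^i_{r_i}<z^i_{r_i+1}=b_i$ for each $i$, cutting the cube into the cuboids $\prod_i[z^i_{j_i},z^i_{j_i+1}]$; its granularity is the minimum of the lengths $z^i_{j+1}-z^i_j$ over all $i,j$. The splitting is fair for $f$ if the cuboids can be partitioned into two families each of whose unions contains exactly half of the Lebesgue measure of each color class of $f$ within the cube. $B_n^{(r_1,\dots,r_d)}$ is the set of colorings in $\mathcal{M}$ for which there exists at least one cube contained in $[-n,n]^d$ having a fair splitting with exactly $r_i$ cuts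 in the $i$-th dimension for each $i$ and granularity at least $1/n$. *)

From HB Require Import structures.
From mathcomp Require Import all_boot all_order all_algebra.
From mathcomp Require Import all_classical all_reals all_analysis.
Set Implicit Arguments. Unset Strict Implicit. Unset Printing Implicit Defensive.
Import Order.TTheory GRing.Theory Num.Theory.
Local Open Scope classical_set_scope.
Local Open Scope ring_scope.

Section Defs.
Variables (R : realType) (d : nat).

Definition pt := 'I_d -> R.

Definition box (a b : pt) : set pt := [set x | forall i, a i <= x i <= b i].

Definition box_vol (a b : pt) : R := \prod_(i < d) Num.max (b i - a i) 0.

(* d-dimensional Lebesgue outer measure: infimum of the total volumes of
   countable covers by boxes.  On Lebesgue measurable sets this is the
   Lebesgue measure lambda. *)
Definition leb_outer (A : set pt) : \bar R :=
  ereal_inf [set s : \bar R | exists (a b : nat -> pt),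
     A `<=` \bigcup_m box (a m) (b m) /\
     s = (\sum_(0 <= m <oo) (box_vol (a m) (b m))%:E)%E].

Definition leb_measurable (A : set pt) : Prop :=
  forall E : set pt, leb_outer E = (leb_outer (E `&` A) + leb_outer (E `&` ~` A))%E.

Definition meas_coloring (k : nat) (f : pt -> 'I_k) : Prop :=
  forall c : 'I_k, leb_measurable (f @^-1` [set c]).

Definition cubeN (n : nat) : set pt :=
  [set x | forall i, - (n%:R) <= x i <= n%:R].

Definition Dn (k n : nat) (f g : pt -> 'I_k) : set pt :=
  cubeN n `&` [set x | f x <> g x].

Definition dn (k n : nat) (f g : pt -> 'I_k) : \bar R :=
  (leb_outer (Dn n f g) * ((n%:R ^+ d)^-1)%:E)%E.

Definition dist (k : nat) (f g : pt -> 'I_k) : \bar R :=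
  (\sum_(1 <= n <oo) (dn n f g * ((2%:R ^+ n.+1)^-1)%:E))%E.

Definition cube (a : pt) (s : R) : set pt := box a (fun i => a i + s).

(* the cuboid with index j (0 <= j i <= r i) of the splitting given by the
   cut points z i 0 < z i 1 < ... < z i (r i).+1 *)
Definition cuboid (z : 'I_d -> nat -> R) (j : 'I_d -> nat) : set pt :=
  box (fun i => z i (j i)) (fun i => z i (j i).+1).

Definition valid_index (r : 'I_d -> nat) (j : 'I_d -> nat) : Prop :=
  forall i, (j i <= r i)%N.

(* B_n^{(r_1,...,r_d)}: there is a cube contained in [-n,n]^d with a splitting
   having exactly r i cuts in dimension i, granularity >= 1/n, which is fair
   for f: the cuboids can be split into two families (sigma = true / false)
   such that the union of the first family contains exactly half of the
   measure of each color class of f within the cube (hence so does the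
   second family, up to a null set). *)
Definition B (k n : nat) (r : 'I_d -> nat) (f : pt -> 'I_k) : Prop :=
  exists (a : pt) (s : R) (z : 'I_d -> nat -> R) (sigma : ('I_d -> nat) -> bool),
    [/\ 0 < s,
        cube a s `<=` cubeN n,
        (forall i, z i 0%N = a i /\ z i (r i).+1 = a i + s),
        (forall i (j : nat), (j <= r i)%N ->
            z i j < z i j.+1 /\ (n%:R)^-1 <= z i j.+1 - z i j) &
        (forall c : 'I_k,
           leb_outer ([set x | exists j, [/\ valid_index r j, sigma j & cuboid z j x]]
                        `&` (f @^-1` [set c]))
           = (leb_outer (cube a s `&` (f @^-1` [set c])) * (2^-1)%:E)%E /\
           leb_outer ([set x | exists j, [/\ valid_index r j, ~~ sigma j & cuboid z j x]]
                        `&` (f @^-1` [set c]))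
           = (leb_outer (cube a s `&` (f @^-1` [set c])) * (2^-1)%:E)%E)].

End Defs.

(* Fix an assignment [σ] of the cuboids of a splitting [z] to two families [T]
   and [F] and let [Q] be the split cube. The defect
     Φ_f(z, σ) = Σ_c |λ(T ∩ f⁻¹c) - λ(Q ∩ f⁻¹c)/2| + |λ(F ∩ f⁻¹c) - λ(Q ∩ f⁻¹c)/2|
   vanishes for some admissible [z] (a cube in [-n,n]^d, granularity >= 1/n)
   exactly when [f] is in [B_n]. Admissible splittings, encoded by their cut
   points, form a compact set, and moving every cut by at most [δ] changes
   Φ_f by [O(δ)], because the affected points lie in slabs of width [2δ] around
   the cut hyperplanes. So if [f] is not in [B_n], Φ_f is bounded below by some
   [e > 0], uniformly over the finitely many [σ]. Recoloring [f] into [g]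
   changes Φ by at most [3k λ(D_n(f,g))], and [λ(D_n(f,g)) <= n^d 2^(n+1) d(f,g)],
   so colorings [g] close to [f] are not in [B_n] either. *)

From HB Require Import structures.
From mathcomp Require Import all_boot all_order all_algebra.
From mathcomp Require Import all_classical all_reals all_analysis.
From mathcomp Require Import lra ring.
Import Order.TTheory GRing.Theory Num.Theory numFieldNormedType.Exports.
Local Open Scope classical_set_scope.
Local Open Scope ring_scope.
Set Implicit Arguments. Unset Strict Implicit. Unset Printing Implicit Defensive.

Section OuterMeasure.
Variables (R : realType) (d : nat).
Hypothesis d_gt0 : (0 < d)%N.
Local Notation pt := (pt R d).
Local Notation lam := (@leb_outer R d).

Lemma box_vol_ge0 (a b : pt) : 0 <= box_vol a b.
Proof. by apply: prodr_ge0 => i _; rewrite le_max lexx orbT. Qed.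

(* Needs [0 < d]: for [d = 0] every box is a point of volume [1]. *)
Lemma box_volxx (a : pt) : box_vol a a = 0.
Proof. by rewrite /box_vol (bigD1 (Ordinal d_gt0)) //= subrr maxxx mul0r. Qed.

Lemma leb_outer_ge0 (A : set pt) : (0 <= lam A)%E.
Proof.
apply: le_ereal_inf_tmp => _ [a [b [_ ->]]].
by apply: nneseries_ge0 => m _ _; rewrite lee_fin box_vol_ge0.
Qed.

Lemma le_leb_outer (A B : set pt) : A `<=` B -> (lam A <= lam B)%E.
Proof.
move=> AB; apply: ereal_inf_le_tmp => x [a [b [cov ->]]].
by exists a, b; split => //; exact: subset_trans AB cov.
Qed.

Lemma nneseries_le_ub (u : nat -> \bar R) (C : \bar R) :
  (forall m, (0 <= u m)%E) -> (forall N, (\sum_(0 <= m < N) u m <= C)%E) ->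
  (\sum_(0 <= m <oo) u m <= C)%E.
Proof.
move=> u0 uC; apply: lime_le; first by apply: is_cvg_nneseries => m _ _.
exact: nearW.
Qed.

Lemma leb_outer_box (a b : pt) : (lam (box a b) <= (box_vol a b)%:E)%E.
Proof.
apply: ge_ereal_inf.
pose b' m := if m is 0%N then b else a.
exists (\sum_(0 <= m <oo) (box_vol a (b' m))%:E)%E.
  by exists (fun=> a), b'; split => // x bx; exists 0%N.
apply: nneseries_le_ub => [m|[|N]]; first by rewrite lee_fin box_vol_ge0.
  by rewrite big_geq // lee_fin box_vol_ge0.
by rewrite big_nat_recl // big1 ?adde0 // => i _; rewrite /b' box_volxx.
Qed.

Lemma sum_interleave (x y : nat -> \bar R) N :
  (\sum_(0 <= m < N.*2) (if odd m then y m./2 else x m./2) =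
   \sum_(0 <= m < N) x m + \sum_(0 <= m < N) y m)%E.
Proof.
elim: N => [|N IH]; first by rewrite !big_geq // adde0.
rewrite doubleS !big_nat_recr //= IH odd_double /= uphalf_double half_double.
by rewrite -!addeA; congr (_ + _)%E; rewrite addeCA.
Qed.

Lemma leb_outer_neqNy (A : set pt) : lam A != -oo%E.
Proof. by rewrite gt_eqF // (lt_le_trans ltNy0 (leb_outer_ge0 A)). Qed.

(* Almost optimal covers of [A] and [B] are interleaved into a cover of [A `|` B]. *)
Lemma leb_outer_setU (A B : set pt) : (lam (A `|` B) <= lam A + lam B)%E.
Proof.
have [->|Af] := eqVneq (lam A) +oo%E; first by rewrite addye ?leey ?leb_outer_neqNy.
have [->|Bf] := eqVneq (lam B) +oo%E; first by rewrite addey ?leey ?leb_outer_neqNy.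
have fA : lam A \is a fin_num by rewrite fin_numE Af leb_outer_neqNy.
have fB : lam B \is a fin_num by rewrite fin_numE Bf leb_outer_neqNy.
apply/lee_addgt0Pr => e e0.
have e2 : 0 < e / 2 by rewrite divr_gt0.
have := lteDl ((e/2)%:E) fA; rewrite lte_fin e2.
move=> /ereal_inf_lt [_ [aA [bA [covA ->]]]] lA.
have := lteDl ((e/2)%:E) fB; rewrite lte_fin e2.
move=> /ereal_inf_lt [_ [aB [bB [covB ->]]]] lB.
pose volA m := (box_vol (aA m) (bA m))%:E.
pose volB m := (box_vol (aB m) (bB m))%:E.
pose a2 m := if odd m then aB m./2 else aA m./2.
pose b2 m := if odd m then bB m./2 else bA m./2.
have vol2 m : (box_vol (a2 m) (b2 m))%:E = if odd m then volB m./2 else volA m./2.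
  by rewrite /a2 /b2; case: (odd m).
apply: le_trans (_ : (\sum_(0 <= m <oo) (box_vol (a2 m) (b2 m))%:E <= _)%E).
  apply: ereal_inf_lbound; exists a2, b2; split => //.
  move=> x [/covA [m _ Hm]|/covB [m _ Hm]].
    by exists m.*2 => //; rewrite /a2 /b2 odd_double half_double.
  by exists m.*2.+1 => //; rewrite /a2 /b2 /= odd_double /= uphalf_double.
apply: nneseries_le_ub => [m|N]; first by rewrite lee_fin box_vol_ge0.
apply: le_trans (_ : \sum_(0 <= m < N.*2) (box_vol (a2 m) (b2 m))%:E <= _)%E.
  apply: (lee_sum_nneg_natr _ xpredT) => [m _ _|]; first by rewrite lee_fin box_vol_ge0.
  by rewrite -addnn leq_addr.
rewrite (eq_bigr _ (fun m _ => vol2 m)) sum_interleave.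
apply: le_trans (_ : (\sum_(0 <= m <oo) volA m + \sum_(0 <= m <oo) volB m <= _)%E).
  by apply: leeD; apply: nneseries_lim_ge => m _ _; rewrite lee_fin box_vol_ge0.
apply/ltW/(lt_le_trans (lteD lA lB)).
by rewrite -(fineK fA) -(fineK fB) -!EFinD lee_fin; lra.
Qed.

End OuterMeasure.

(* [fine] sends [+oo] to [0]: [vol] is only meaningful on bounded sets, and is
   only used on subsets of some [cubeN n]. *)
Definition vol (R : realType) (d : nat) (A : set (pt R d)) : R := fine (leb_outer A).

Section VolumeInCube.
Variables (R : realType) (d n : nat).
Hypothesis d_gt0 : (0 < d)%N.
Local Notation pt := (pt R d).
Local Notation lam := (@leb_outer R d).
Local Notation vol := (@vol R d).
Local Notation C := (@cubeN R d n).

Lemma leb_outer_fin_num (A : set pt) : A `<=` C -> lam A \is a fin_num.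
Proof.
move=> AC; rewrite fin_numE leb_outer_neqNy /= lt_eqF //.
apply: le_lt_trans (ltry (box_vol (fun=> - n%:R) (fun=> n%:R))).
exact: le_trans (le_leb_outer AC) (leb_outer_box d_gt0 _ _).
Qed.

Lemma volE (A : set pt) : A `<=` C -> lam A = (vol A)%:E.
Proof. by move=> AC; rewrite /vol fineK // leb_outer_fin_num. Qed.

Lemma vol_ge0 (A : set pt) : 0 <= vol A.
Proof. exact/fine_ge0/leb_outer_ge0. Qed.

Lemma le_vol (A B : set pt) : A `<=` B -> B `<=` C -> vol A <= vol B.
Proof.
move=> AB BC; rewrite -lee_fin -!volE //; last exact: subset_trans AB BC.
exact: le_leb_outer.
Qed.

Lemma vol_sub_setU (A B B' : set pt) : A `<=` B `|` B' -> B `<=` C -> B' `<=` C ->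
  vol A <= vol B + vol B'.
Proof.
move=> AB BC B'C; have AC : A `<=` C by move=> x /AB [/BC|/B'C].
rewrite -lee_fin EFinD -!volE //.
exact: le_trans (le_leb_outer AB) (leb_outer_setU B B').
Qed.

Lemma vol_sub_box (A : set pt) a b : A `<=` box a b -> A `<=` C -> vol A <= box_vol a b.
Proof.
move=> Ab AC; rewrite -lee_fin -volE //.
exact: le_trans (le_leb_outer Ab) (leb_outer_box d_gt0 _ _).
Qed.

Lemma vol0 : vol set0 = 0.
Proof.
apply/eqP; rewrite eq_le vol_ge0 andbT -(box_volxx d_gt0 (fun=> 0)).
exact: vol_sub_box.
Qed.

Lemma vol_bigcup_seq (I : eqType) (s : seq I) (F : I -> set pt) :
  (forall i, F i `<=` C) ->
  vol [set x | exists2 i, i \in s & F i x] <= \sum_(i <- s) vol (F i).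
Proof.
move=> FC; elim: s => [|i s IH].
  by rewrite big_nil (_ : [set x | _] = set0) ?vol0 //; apply/seteqP; split => x // [].
rewrite big_cons; apply: le_trans (lerD (lexx _) IH); apply: vol_sub_setU => //.
- move=> x [j]; rewrite inE => /orP [/eqP ->|js] Fx; [by left|by right; exists j].
- by move=> x [j _ /FC].
Qed.

Lemma dist_vol_le (A A' S S' : set pt) (e : R) :
  A `<=` C -> A' `<=` C -> S `<=` C -> S' `<=` C ->
  A' `<=` A `|` S -> A `<=` A' `|` S' -> vol S <= e -> vol S' <= e ->
  `|vol A' - vol A| <= e.
Proof.
move=> AC A'C SC S'C A'S AS' Se S'e.
have := vol_sub_setU A'S AC SC; have := vol_sub_setU AS' A'C S'C.
by rewrite ler_norml => *; apply/andP; split; lra.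
Qed.

Lemma vol_halfE (A Q : set pt) : A `<=` C -> Q `<=` C ->
  lam A = (lam Q * (2^-1)%:E)%E <-> vol A = vol Q / 2.
Proof.
by move=> sA sQ; rewrite (volE sA) (volE sQ) -EFinM; split => [[]|->].
Qed.

Lemma dist_ge_vol_Dn (k : nat) (f g : pt -> 'I_k) : (0 < n)%N ->
  ((vol (Dn n f g) * ((n%:R ^+ d)^-1 * (2 ^+ n.+1)^-1))%:E <= dist f g)%E.
Proof.
move=> n_gt0; have t0 m : (0 <= dn m f g * ((2%:R ^+ m.+1)^-1)%:E :> \bar R)%E.
  by rewrite !mule_ge0 ?leb_outer_ge0 // lee_fin invr_ge0 exprn_ge0.
apply: le_trans (nneseries_lim_ge n.+1 (fun m _ _ => t0 m)).
rewrite big_nat_recr //=; apply: le_trans (leeDr _ _); last exact: sume_ge0.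
have DC : Dn n f g `<=` C by move=> x [].
by rewrite /dn (volE DC) -!EFinM mulrA.
Qed.

End VolumeInCube.

Section Splittings.
Variables (R : realType) (d n : nat) (r : 'I_d -> nat).
Hypotheses (d_gt0 : (0 < d)%N) (n_gt0 : (0 < n)%N).
Local Notation pt := (pt R d).
Local Notation vol := (@vol R d).
Local Notation C := (@cubeN R d n).

(* Cut points [z i t] only matter for [t <= (r i).+1 < cut_bound]. *)
Definition cut_bound := (\max_(i < d) r i).+2.

Lemma cut_lt_bound i t : (t <= (r i).+1)%N -> (t < cut_bound)%N.
Proof. by move=> ht; apply: leq_ltn_trans ht _; rewrite !ltnS leq_bigmax. Qed.

Definition side (z : 'I_d -> nat -> R) : R :=
  let i0 := Ordinal d_gt0 in z i0 (r i0).+1 - z i0 0%N.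

Definition is_splitting (z : 'I_d -> nat -> R) : Prop :=
  [/\ forall i, z i (r i).+1 - z i 0%N = side z,
      forall i, - n%:R <= z i 0%N /\ z i (r i).+1 <= n%:R &
      forall i j, (j <= r i)%N -> n%:R^-1 <= z i j.+1 - z i j].

Definition split_cube (z : 'I_d -> nat -> R) : set pt :=
  box (fun i => z i 0%N) (fun i => z i (r i).+1).

Definition split_family (z : 'I_d -> nat -> R) (P : ('I_d -> nat) -> bool) : set pt :=
  [set x | exists j, [/\ valid_index r j, P j & cuboid z j x]].

Lemma invn_gt0 : 0 < n%:R^-1 :> R.
Proof. by rewrite invr_gt0 ltr0n. Qed.

Lemma splitting_le z i j j' : is_splitting z ->
  (j <= j')%N -> (j' <= (r i).+1)%N -> z i j <= z i j'.
Proof.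
move=> [_ _ gran]; elim: j' => [|j' IH]; first by rewrite leqn0 => /eqP ->.
rewrite leq_eqVlt => /orP [/eqP -> //|]; rewrite ltnS => jj' j'r.
apply: le_trans (IH jj' (ltnW j'r)) _.
by have := gran i j' j'r; have := invn_gt0; lra.
Qed.

Lemma split_cube_sub z : is_splitting z -> split_cube z `<=` C.
Proof.
move=> [_ inC _] x bx i; have [h1 h2] := inC i; have /andP [x1 x2] := bx i.
by apply/andP; split; [exact: le_trans x1|exact: le_trans h2].
Qed.

Lemma cuboid_sub_split_cube z j : is_splitting z -> valid_index r j ->
  cuboid z j `<=` split_cube z.
Proof.
move=> sz vj x cx i; have /andP [x1 x2] := cx i; have ji := vj i.
have z0 := splitting_le (i := i) sz (leq0n (j i)) (leqW ji).
have z1 := splitting_le (i := i) (j := (j i).+1) (j' := (r i).+1) sz ji (leqnn _).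
by apply/andP; split; [exact: le_trans z0 x1|exact: le_trans x2 z1].
Qed.

Lemma split_family_sub z P : is_splitting z -> split_family z P `<=` C.
Proof.
move=> sz x [j [vj _ cx]]; exact/(split_cube_sub sz)/(cuboid_sub_split_cube sz vj).
Qed.

Definition slab (z : 'I_d -> nat -> R) (δ : R) : set pt :=
  C `&` [set x | exists (i : 'I_d) (t : 'I_cut_bound), `|x i - z i t| <= δ].

Lemma box_diff_slab (z z' : 'I_d -> nat -> R) (δ : R) (l u : 'I_d -> nat) (x : pt) :
  (forall i, (l i <= (r i).+1)%N /\ (u i <= (r i).+1)%N) ->
  (forall i t, `|z' i t - z i t| <= δ) ->
  box (fun i => z' i (l i)) (fun i => z' i (u i)) x ->
  ~ box (fun i => z i (l i)) (fun i => z i (u i)) x ->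
  exists i (t : 'I_cut_bound), `|x i - z i t| <= δ.
Proof.
move=> hlu hz bx /existsNP [i /negP]; rewrite negb_and -!ltNge => hi.
have /andP [x1 x2] := bx i; have [hl hu] := hlu i.
case/orP: hi => hi; [exists i, (inord (l i))|exists i, (inord (u i))];
  rewrite inordK ?(cut_lt_bound hl) ?(cut_lt_bound hu) //.
  by have := hz i (l i); rewrite !ler_norml => /andP [h1 h2]; apply/andP; split; lra.
by have := hz i (u i); rewrite !ler_norml => /andP [h1 h2]; apply/andP; split; lra.
Qed.

Definition slab_box (z : 'I_d -> nat -> R) (δ : R) (i : 'I_d) (t : 'I_cut_bound) : set pt :=
  box (fun l => if l == i then z i t - δ else - n%:R)
      (fun l => if l == i then z i t + δ else n%:R).

Lemma box_vol_slab_box (z : 'I_d -> nat -> R) (δ : R) i t : 0 <= δ ->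
  box_vol (fun l => if l == i then z i t - δ else - n%:R)
          (fun l => if l == i then z i t + δ else n%:R : R)
  = (2 * δ) * (n%:R + n%:R) ^+ d.-1.
Proof.
move=> d0; rewrite /box_vol (bigD1 i) //= eqxx max_l; last lra.
rewrite (eq_bigr (fun=> n%:R + n%:R)); last first.
  by move=> l /negbTE ->; rewrite opprK max_l // addr_ge0 // ler0n.
by rewrite prodr_const cardC1 card_ord; congr (_ * _); lra.
Qed.

Definition slab_const : R := (d * cut_bound)%:R * (2 * (n%:R + n%:R) ^+ d.-1).

Lemma slab_const_ge0 : 0 <= slab_const.
Proof. by rewrite /slab_const !mulr_ge0 ?exprn_ge0 ?addr_ge0 ?ler0n. Qed.

Lemma vol_slab (z : 'I_d -> nat -> R) (δ : R) : 0 <= δ -> vol (slab z δ) <= slab_const * δ.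
Proof.
move=> d0; pose T := ('I_d * 'I_cut_bound)%type.
pose F (p : T) := slab_box z δ p.1 p.2 `&` C.
have FC p : F p `<=` C by move=> x [].
pose S := [set x | exists2 p, p \in index_enum T & F p x].
apply: le_trans (le_vol (n := n) d_gt0 (B := S) _ _) _.
- move=> x [Cx [i [t h]]]; exists (i, t); first by rewrite mem_index_enum.
  split => // l; rewrite /=; case: eqP => [->|_]; last exact: Cx.
  by move: h; rewrite ler_norml => /andP [h1 h2]; apply/andP; split; lra.
- by move=> x [_ _ [_ Cx]].
apply: le_trans (vol_bigcup_seq d_gt0 _ FC) _.
apply: le_trans (_ : \sum_(p : T) (2 * δ) * (n%:R + n%:R) ^+ d.-1 <= _).
  apply: ler_sum => p _; rewrite -(box_vol_slab_box z p.1 p.2 d0).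
  by apply: (vol_sub_box (n := n) d_gt0) => x [].
rewrite sumr_const -[#|_|]/#|{: T}| card_prod !card_ord -mulr_natl /slab_const.
by rewrite natrM; lra.
Qed.

Lemma split_family_perturb (z z' : 'I_d -> nat -> R) δ P (X : set pt) :
  is_splitting z' -> (forall i t, `|z' i t - z i t| <= δ) ->
  split_family z' P `&` X `<=` (split_family z P `&` X) `|` slab z δ.
Proof.
move=> sz' hz x [[j [vj Pj cx]] Xx].
have [cz|ncz] := pselect (cuboid z j x); first by left; split => //; exists j.
right; split; first by apply: (split_family_sub sz'); exists j.
apply: (box_diff_slab (l := j) (u := fun i => (j i).+1) _ hz cx ncz) => i.
by split; [apply: leqW|]; apply: vj.
Qed.

Lemma split_cube_perturb (z z' : 'I_d -> nat -> R) δ (X : set pt) :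
  is_splitting z' -> (forall i t, `|z' i t - z i t| <= δ) ->
  split_cube z' `&` X `<=` (split_cube z `&` X) `|` slab z δ.
Proof.
move=> sz' hz x [cx Xx].
have [cz|ncz] := pselect (split_cube z x); first by left.
right; split; first exact: (split_cube_sub sz').
exact: (box_diff_slab (l := fun=> 0%N) (u := fun i => (r i).+1) _ hz cx ncz).
Qed.

Lemma is_splitting_ext (z z' : 'I_d -> nat -> R) :
  (forall i t, (t <= (r i).+1)%N -> z' i t = z i t) -> is_splitting z -> is_splitting z'.
Proof.
move=> h [sides inC gran]; have es : side z' = side z by rewrite /side !h.
split.
- by move=> i; rewrite es !h // -(sides i).
- by move=> i; rewrite !h //; exact: inC.
- by move=> i j ji; rewrite !h ?ltnS ?(leqW ji) //; exact: gran.
Qed.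

Lemma split_family_ext (z z' : 'I_d -> nat -> R) (P P' : ('I_d -> nat) -> bool) :
  (forall i t, (t <= (r i).+1)%N -> z' i t = z i t) ->
  (forall j, valid_index r j -> P' j = P j) ->
  split_family z' P' = split_family z P.
Proof.
move=> hz hP.
have cuboidE j : valid_index r j -> cuboid z' j = cuboid z j.
  by move=> vj; congr box; apply: funext => i; rewrite hz // ?ltnS ?leqW ?vj.
by apply/seteqP; split => x [j [vj Pj cx]]; exists j; split => //;
  rewrite ?hP ?cuboidE // -?hP -?cuboidE.
Qed.

End Splittings.

Definition half_defect (R : realType) (k : nat) (T F Q : 'I_k -> R) : R :=
  \sum_(c < k) (`|T c - Q c / 2| + `|F c - Q c / 2|).

Lemma half_defect_ge0 (R : realType) (k : nat) (T F Q : 'I_k -> R) :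
  0 <= half_defect T F Q.
Proof. by apply: sumr_ge0 => c _; apply: addr_ge0. Qed.

Lemma half_defect_eq0 (R : realType) (k : nat) (T F Q : 'I_k -> R) :
  half_defect T F Q = 0 <-> forall c, T c = Q c / 2 /\ F c = Q c / 2.
Proof.
split => [h0 c|h]; last first.
  by apply: big1 => c _; have [-> ->] := h c; rewrite subrr normr0 addr0.
have := psumr_eq0P (P := xpredT) (fun c _ => addr_ge0 (normr_ge0 _) (normr_ge0 _)) h0 isT.
move=> /(_ c) /eqP; rewrite paddr_eq0 // !normr_eq0 !subr_eq0.
by move=> /andP [/eqP -> /eqP ->].
Qed.

Lemma half_defect_lipschitz (R : realType) (k : nat) (T F Q T' F' Q' : 'I_k -> R) η :
  (forall c, [/\ `|T c - T' c| <= η, `|F c - F' c| <= η & `|Q c - Q' c| <= η]) ->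
  `|half_defect T F Q - half_defect T' F' Q'| <= k%:R * (3 * η).
Proof.
move=> h; rewrite -sumrB; apply: le_trans (ler_norm_sum _ _ _) _.
rewrite mulr_natl -[in leRHS](card_ord k) -sumr_const; apply: ler_sum => c _.
have [h1 h2 h3] := h c.
have k1 : `|(T c - Q c / 2) - (T' c - Q' c / 2)| <= η + η / 2.
  by move: h1 h3; rewrite !ler_norml => /andP [? ?] /andP [? ?]; apply/andP; split; lra.
have k2 : `|(F c - Q c / 2) - (F' c - Q' c / 2)| <= η + η / 2.
  by move: h2 h3; rewrite !ler_norml => /andP [? ?] /andP [? ?]; apply/andP; split; lra.
have := le_trans (ler_dist_dist _ _) k1; have := le_trans (ler_dist_dist _ _) k2.
by rewrite !ler_norml => /andP [? ?] /andP [? ?]; apply/andP; split; lra.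
Qed.

Section FairDefect.
Variables (R : realType) (d k n : nat) (r : 'I_d -> nat).
Hypotheses (d_gt0 : (0 < d)%N) (n_gt0 : (0 < n)%N).
Local Notation pt := (pt R d).
Local Notation vol := (@vol R d).
Local Notation C := (@cubeN R d n).
Local Notation cut_bound := (cut_bound r).
Local Notation is_splitting := (is_splitting n r d_gt0).
Local Notation split_family := (@split_family R d r).
Local Notation split_cube := (@split_cube R d r).
Local Notation slab_const := (@slab_const R d n r).

(* Encoding index vectors in a finite type makes the choice [σ] of the first
   family finite; it is faithful on valid indices since [j i <= r i < cut_bound]. *)
Definition grid_class (j : 'I_d -> nat) : {ffun 'I_d -> 'I_cut_bound} :=
  [ffun i => inord (j i)].

Definition chosen (σ : {ffun {ffun 'I_d -> 'I_cut_bound} -> bool}) j := σ (grid_class j).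

Lemma chosen_encode (P : ('I_d -> nat) -> bool) :
  exists σ, forall j, valid_index r j -> chosen σ j = P j.
Proof.
exists [ffun J : {ffun 'I_d -> 'I_cut_bound} => P (fun i => nat_of_ord (J i))].
move=> j vj; rewrite /chosen /grid_class ffunE; congr P; apply: funext => i.
by rewrite ffunE inordK // (@cut_lt_bound _ r i) // leqW // vj.
Qed.

Definition fair_defect (f : pt -> 'I_k) (z : 'I_d -> nat -> R) σ : R :=
  half_defect (fun c => vol (split_family z (chosen σ) `&` f @^-1` [set c]))
              (fun c => vol (split_family z (fun j => ~~ chosen σ j) `&` f @^-1` [set c]))
              (fun c => vol (split_cube z `&` f @^-1` [set c])).

Lemma fair_defect_perturb f (z z' : 'I_d -> nat -> R) δ σ :
  is_splitting z -> is_splitting z' -> (forall i t, `|z' i t - z i t| <= δ) ->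
  `|fair_defect f z' σ - fair_defect f z σ| <= k%:R * (3 * (slab_const * δ)).
Proof.
move=> sz sz' hz.
have hz' i t : `|z i t - z' i t| <= δ by rewrite distrC.
have δ0 : 0 <= δ := le_trans (normr_ge0 _) (hz (Ordinal d_gt0) 0%N).
have slabC z0 : slab n r z0 δ `<=` C by move=> x [].
have slab_le z0 := vol_slab n r d_gt0 z0 δ0.
have subC A (X : set pt) : A `<=` C -> A `&` X `<=` C by move=> AC x [/AC].
have perturb_family P X :
    `|vol (split_family z' P `&` X) - vol (split_family z P `&` X)| <= slab_const * δ.
  apply: (dist_vol_le d_gt0 _ _ _ _ (split_family_perturb n_gt0 sz' hz)
                                    (split_family_perturb n_gt0 sz hz')) => //;
    exact/subC/split_family_sub.
have perturb_cube X :
    `|vol (split_cube z' `&` X) - vol (split_cube z `&` X)| <= slab_const * δ.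
  apply: (dist_vol_le d_gt0 _ _ _ _ (split_cube_perturb sz' hz)
                                    (split_cube_perturb sz hz')) => //;
    exact/subC/split_cube_sub.
by apply: half_defect_lipschitz => c; split;
  [exact: perturb_family|exact: perturb_family|exact: perturb_cube].
Qed.

Lemma fair_defect_recolor f g (z : 'I_d -> nat -> R) σ : is_splitting z ->
  `|fair_defect g z σ - fair_defect f z σ| <= k%:R * (3 * vol (Dn n f g)).
Proof.
move=> sz; have DC : Dn n f g `<=` C by move=> x [].
have recolor (Y : set pt) c : Y `<=` C ->
    `|vol (Y `&` g @^-1` [set c]) - vol (Y `&` f @^-1` [set c])| <= vol (Dn n f g).
  move=> YC; apply: (dist_vol_le d_gt0 _ _ DC DC) => //.
  - by move=> x [/YC].
  - by move=> x [/YC].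
  - move=> x [Yx /= gx]; have [fx|fx] := pselect (f x = c); [by left|right].
    by split; [exact: YC|move=> /= fg; apply: fx; rewrite fg].
  - move=> x [Yx /= fx]; have [gx|gx] := pselect (g x = c); [by left|right].
    by split; [exact: YC|move=> /= fg; apply: gx; rewrite -fg].
by apply: half_defect_lipschitz => c; split; apply: recolor;
  [exact: split_family_sub|exact: split_family_sub|exact: split_cube_sub].
Qed.

End FairDefect.

Lemma continuous_sub (R : realType) (T : topologicalType) (φ ψ : T -> R) :
  continuous φ -> continuous ψ -> continuous (fun x => φ x - ψ x).
Proof. by move=> cφ cψ x; apply: cvgB; [exact: cφ|exact: cψ]. Qed.

Lemma closure_le (R : realType) (T : topologicalType) (A : set T) (φ ψ : T -> R) :
  continuous φ -> continuous ψ -> (forall x, A x -> φ x <= ψ x) ->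
  forall x, closure A x -> φ x <= ψ x.
Proof.
move=> cφ cψ Aφψ; pose B := [set x | φ x <= ψ x].
have clB : closed B.
  rewrite (_ : B = (fun x => ψ x - φ x) @^-1` [set y | 0 <= y]).
    exact: (continuous_closedP _).1 (continuous_sub cψ cφ) _ (@closed_ge R 0).
  by apply/seteqP; split => y; rewrite /B /= subr_ge0.
by move=> x /(closureS (B := B) Aφψ) /clB.
Qed.

Section Compactness.
Variables (R : realType) (d k n : nat) (r : 'I_d -> nat).
Hypotheses (d_gt0 : (0 < d)%N) (n_gt0 : (0 < n)%N).
Local Notation pt := (pt R d).
Local Notation cut_bound := (cut_bound r).
Local Notation is_splitting := (is_splitting n r d_gt0).
Local Notation slab_const := (@slab_const R d n r).
Local Notation N := (d * cut_bound)%N.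
Local Notation fair_defect := (@fair_defect R d k r).

Definition grid_of_vec (v : 'rV[R]_N) : 'I_d -> nat -> R :=
  fun i t => v 0 (mxvec_index i (inord t)).

(* The coordinates that [grid_of_vec] ignores are also bounded, for compactness. *)
Definition splitting_vecs : set 'rV[R]_N :=
  [set v | is_splitting (grid_of_vec v) /\ forall c, - n%:R <= v 0 c <= n%:R].

Lemma continuous_grid i t : continuous (fun v => grid_of_vec v i t).
Proof. move=> v; exact: coord_continuous. Qed.

Lemma continuous_grid_sub i t i' t' :
  continuous (fun v => grid_of_vec v i t - grid_of_vec v i' t').
Proof. exact: continuous_sub (@continuous_grid i t) (@continuous_grid i' t'). Qed.

Lemma grid_of_vec_encode (z : 'I_d -> nat -> R) : is_splitting z ->
  exists2 v, splitting_vecs v & forall i t, (t <= (r i).+1)%N -> grid_of_vec v i t = z i t.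
Proof.
move=> sz; pose v : 'rV[R]_N :=
  mxvec (\matrix_(i, t) z i (if (t <= (r i).+1)%N then nat_of_ord t else 0%N)).
have zvE i t : (t <= (r i).+1)%N -> grid_of_vec v i t = z i t.
  move=> ti; rewrite /grid_of_vec mxvecE mxE inordK; first by rewrite ti.
  exact: cut_lt_bound ti.
exists v => //; split; first exact: is_splitting_ext zvE sz.
move=> c; case: (mxvec_indexP c) => i t; rewrite mxvecE mxE.
set t' := if _ then _ else _; have t'i : (t' <= (r i).+1)%N by rewrite /t'; case: ifP.
have [_ inC _] := sz; have [lo hi] := inC i.
have := splitting_le n_gt0 sz (leq0n t') t'i.
have := splitting_le n_gt0 sz t'i (leqnn _).
by move=> ? ?; apply/andP; split; lra.
Qed.

Lemma closed_splitting_vecs : closed splitting_vecs.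
Proof.
move=> v clv.
have limit_le (φ ψ : 'rV[R]_N -> R) : continuous φ -> continuous ψ ->
    (forall w, splitting_vecs w -> φ w <= ψ w) -> φ v <= ψ v.
  by move=> cφ cψ h; exact: closure_le cφ cψ h v clv.
have cc (c : R) : continuous (fun _ : 'rV[R]_N => c) by exact: cst_continuous.
set i0 := Ordinal d_gt0.
split; first split.
- move=> i; rewrite /side -/i0; apply/le_anti/andP; split.
  + apply: (limit_le _ _ (@continuous_grid_sub i (r i).+1 i 0%N)
                       (@continuous_grid_sub i0 (r i0).+1 i0 0%N)) => w [[sides _ _] _].
    by move: (sides i); rewrite /side /= => ->.
  + apply: (limit_le _ _ (@continuous_grid_sub i0 (r i0).+1 i0 0%N)
                       (@continuous_grid_sub i (r i).+1 i 0%N)) => w [[sides _ _] _].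
    by move: (sides i); rewrite /side /= => ->.
- move=> i; split.
  + apply: (limit_le _ _ (cc _) (@continuous_grid i 0%N)).
    by move=> w [[_ inC _] _]; case: (inC i).
  + apply: (limit_le _ _ (@continuous_grid i (r i).+1) (cc _)).
    by move=> w [[_ inC _] _]; case: (inC i).
- move=> i j ji; apply: (limit_le _ _ (cc _) (@continuous_grid_sub i j.+1 i j)).
  by move=> w [[_ _ gran] _]; apply: gran.
- move=> c; apply/andP; split.
  + by apply: (limit_le _ _ (cc _) (@coord_continuous _ _ _ 0 c)) => w [_ /(_ c) /andP []].
  + by apply: (limit_le _ _ (@coord_continuous _ _ _ 0 c) (cc _)) => w [_ /(_ c) /andP []].
Qed.

Lemma compact_splitting_vecs : compact splitting_vecs.
Proof.
apply: (subclosed_compact closed_splitting_vecs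
  (rV_compact (fun _ => @segment_compact R (- n%:R) n%:R))).
by move=> v [_ hc] c; rewrite /= in_itv /=; exact: hc.
Qed.

Lemma within_continuous_fair_defect (f : pt -> 'I_k) σ :
  {within splitting_vecs, continuous (fun v => fair_defect f (grid_of_vec v) σ)}.
Proof.
apply/subspace_continuousP => v Pv.
set L := k%:R * (3 * slab_const).
have L0 : 0 <= L by rewrite mulr_ge0 ?ler0n // mulr_ge0 ?slab_const_ge0.
apply/cvgrPdist_le => e e0; have δ0 : 0 < e / (L + 1) by rewrite divr_gt0 //; lra.
rewrite near_withinE; near=> w => Pw.
have bw : ball v (e / (L + 1)) w by near: w; exact: nbhsx_ballx.
have hz i t : `|grid_of_vec w i t - grid_of_vec v i t| <= e / (L + 1).
  by rewrite distrC; apply: ltW; move: bw => [_ /(_ 0 (mxvec_index i (inord t)))].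
rewrite distrC; apply: le_trans (fair_defect_perturb n_gt0 f σ Pv.1 Pw.1 hz) _.
rewrite (_ : _ * _ = L * (e / (L + 1))); last by rewrite /L; ring.
by rewrite mulrA ler_pdivrMr; [nra|lra].
Unshelve. all: by end_near.
Qed.

Lemma fair_defect_lbound (f : pt -> 'I_k) σ :
  (forall v, splitting_vecs v -> 0 < fair_defect f (grid_of_vec v) σ) ->
  exists2 e, 0 < e & forall v, splitting_vecs v -> e <= fair_defect f (grid_of_vec v) σ.
Proof.
move=> pos; have [[v0 Pv0]|P0] := pselect (splitting_vecs !=set0); last first.
  by exists 1 => // v Pv; exfalso; apply: P0; exists v.
have [v Pv vmin] := compact_EVT_min (ex_intro _ v0 Pv0) compact_splitting_vecs
  (within_continuous_fair_defect (f := f) (σ := σ)).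
rewrite inE in Pv; exists (fair_defect f (grid_of_vec v) σ); first exact: pos.
by move=> w Pw; apply: vmin; rewrite inE.
Qed.

End Compactness.

Section FairSplittings.
Variables (R : realType) (d k n : nat) (r : 'I_d -> nat).
Hypotheses (d_gt0 : (0 < d)%N) (n_gt0 : (0 < n)%N).
Local Notation pt := (pt R d).
Local Notation vol := (@vol R d).
Local Notation C := (@cubeN R d n).
Local Notation cut_bound := (cut_bound r).
Local Notation is_splitting := (is_splitting n r d_gt0).
Local Notation side := (side r d_gt0).
Local Notation split_family := (@split_family R d r).
Local Notation split_cube := (@split_cube R d r).
Local Notation fair_defect := (@fair_defect R d k r).
Local Notation grid_of_vec := (@grid_of_vec R d r).
Local Notation splitting_vecs := (@splitting_vecs R d n r d_gt0).

Lemma notB_fair_defect_gt0 (f : pt -> 'I_k) : ~ B n r f ->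
  forall σ v, splitting_vecs v -> 0 < fair_defect f (grid_of_vec v) σ.
Proof.
move=> nBf σ v [sz _]; rewrite lt_def half_defect_ge0 andbT.
apply/eqP => /half_defect_eq0 fair; apply: nBf.
set z := grid_of_vec v in sz fair *; have [sides _ gran] := sz.
have cubeE : cube (fun i => z i 0%N) (side z) = split_cube z.
  by rewrite /cube /split_cube; congr box; apply: funext => i; rewrite -(sides i); lra.
have subC (A X : set pt) : A `<=` C -> A `&` X `<=` C by move=> AC x [/AC].
exists (fun i => z i 0%N), (side z), z, (chosen σ); split.
- rewrite /side; set i0 := Ordinal d_gt0.
  have := splitting_le (i := i0) (j := 1) n_gt0 sz (ltn0Sn _) (leqnn _).
  by have := gran i0 0%N (leq0n _); have := invn_gt0 R n_gt0; lra.
- by rewrite cubeE; exact: split_cube_sub.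
- by move=> i; split => //; have := sides i; lra.
- by move=> i j ji; have := gran i j ji; have := invn_gt0 R n_gt0; split; lra.
- move=> c; have [e1 e2] := fair c; rewrite cubeE.
  have famC P : split_family z P `&` f @^-1` [set c] `<=` C.
    exact/subC/(split_family_sub n_gt0 sz).
  have cubC : split_cube z `&` f @^-1` [set c] `<=` C by exact/subC/split_cube_sub.
  by split; apply/(vol_halfE d_gt0 (famC _) cubC).
Qed.

Lemma B_fair_defect_eq0 (g : pt -> 'I_k) : B n r g ->
  exists v σ, splitting_vecs v /\ fair_defect g (grid_of_vec v) σ = 0.
Proof.
move=> [a [s [z [P [s0 csub ends gaps fair]]]]].
have aC : cube a s a by move=> i; apply/andP; split; lra.
have bC : cube a s (fun i => a i + s) by move=> i; apply/andP; split; lra.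
have sz : is_splitting z.
  split.
  - move=> i; rewrite /side; have [-> ->] := ends i.
    by have [-> ->] := ends (Ordinal d_gt0); ring.
  - move=> i; have := csub _ aC i; have := csub _ bC i; have [-> ->] := ends i.
    by move=> /andP [? ?] /andP [? ?]; split.
  - by move=> i j ji; have [_ ->] := gaps i j ji.
have [v Pv zvE] := grid_of_vec_encode n_gt0 sz.
have [σ chosenE] := chosen_encode r P.
exists v, σ; split => //.
have famT : split_family (grid_of_vec v) (chosen σ) = split_family z P.
  exact: split_family_ext.
have famF : split_family (grid_of_vec v) (fun j => ~~ chosen σ j) =
            split_family z (fun j => ~~ P j).
  by apply: split_family_ext => // j vj; rewrite chosenE.
have cubeE : split_cube (grid_of_vec v) = cube a s.
  by congr box; apply: funext => i; rewrite zvE //; have [] := ends i.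
apply/half_defect_eq0 => c; rewrite famT famF cubeE.
have cubC : cube a s `&` g @^-1` [set c] `<=` C by move=> x [/csub].
have famC Q : split_family z Q `&` g @^-1` [set c] `<=` C.
  by move=> x [/(split_family_sub n_gt0 sz)].
by have [f1 f2] := fair c; split; apply/(vol_halfE d_gt0 (famC _) cubC).
Qed.

Lemma notB_fair_defect_lbound (f : pt -> 'I_k) : ~ B n r f ->
  exists2 e, 0 < e & forall σ v, splitting_vecs v -> e <= fair_defect f (grid_of_vec v) σ.
Proof.
move=> /notB_fair_defect_gt0 pos.
pose lb σ := cid2 (fair_defect_lbound n_gt0 (pos σ)).
exists (\big[Order.min/1]_σ s2val (lb σ)).
  by apply/bigmin_gtP; split => // σ _; exact: (s2valP (lb σ)).
by move=> σ v Pv; apply: le_trans (bigmin_le _ σ _) (s2valP' (lb σ) v Pv).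
Qed.

End FairSplittings.

Theorem mainTheorem2 (R : realType) (k d : nat) (hk : (0 < k)%N) (hd : (0 < d)%N)
  (n : nat) (hn : (0 < n)%N) (r : 'I_d -> nat) (hr : forall i, (0 < r i)%N) :
  forall f : pt R d -> 'I_k, meas_coloring f -> ~ B n r f ->
  exists eps : R, 0 < eps /\
    forall g : pt R d -> 'I_k, meas_coloring g ->
      (dist f g < eps%:E)%E -> ~ B n r g.
Proof.
move=> f _ nBf.
have [e e0 lbound] := notB_fair_defect_lbound hd hn nBf.
pose w : R := (n%:R ^+ d)^-1 * (2 ^+ n.+1)^-1.
have w0 : 0 < w by rewrite mulr_gt0 // invr_gt0 exprn_gt0 // ltr0n.
have k0 : 0 <= k%:R :> R := ler0n R k.
exists (e * w / (3 * k%:R + 1)); split; first by apply: divr_gt0; [exact: mulr_gt0|lra].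
move=> g _ fg /(B_fair_defect_eq0 hd hn) [v [σ [Pv g0]]].
have := fair_defect_recolor hn f g σ Pv.1.
rewrite g0 sub0r normrN ger0_norm ?half_defect_ge0 // => recolor.
have := le_lt_trans (dist_ge_vol_Dn hd f g hn) fg; rewrite lte_fin -/w.
rewrite mulrAC ltr_pM2r // ltr_pdivlMr; last lra.
have := lbound σ v Pv; have := vol_ge0 (Dn n f g); nra.
Qed.
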